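(* Let $n\times n$ $(0,1)$ matrices $A=\begin{bmatrix} 0 & J_{k_1,k_2} & X_1\\ J_{k_1,k_2} & 0 & X_2\\ X_3 & X_4 & Y\end{bmatrix}$ and $B=\begin{bmatrix} J_{k_1,k_2} & 0 & X_1\\ 0 & J_{k_1,k_2} & X_2\\ X_3 & X_4 & Y\end{bmatrix}$ (with $k_1,k_2>0$, $\mathbf{1}^TX_1=\mathbf{1}^TX_2$, $X_3\mathbf{1}=X_4\mathbf{1}$) be Gram mates with all distinct singular values, where $\mathrm{rank}(A-B)=1$. Then, $A$ and $B$ are isomorphic if and only if the remaining matrix $Y$ is fixable.
   Context: $J_{p,q}$ is the $p\times q$ all-ones matrix. Two $(0,1)$ matrices $A\neq B$ are Gram mates if $AA^T=BB^T$ and $A^TA=B^TB$; isomorphic if $B=PAQ$ for permutation matrices $P,Q$. For $(0,1)$ matrices $Z_1,Z_2$ of equal size, $\mathcal R_{Z_1,Z_2}$ is the set of triples $(P_1,P_2,Q)$ of permutation matrices with $Z_2=P_1Z_1Q$ and $Z_1=P_2Z_2Q$, and $\mathcal L_{Z_1,Z_2}$ is the set of triples $(P,Q_1,Q_2)$ of permutation matrices with $Z_1=PZ_1Q_1$ and $Z_2=PZ_2Q_2$. $Y$ is fixable if there exist permutation matrices $P,Q$ with $Y=PYQ$ such that either (i) $(P_1,P_2,Q)\in\mathcal R_{X_1,X_2}$ and $(P,Q_3,Q_4)\in\mathcal L_{X_3,X_4}$ for some $P_1,P_2,Q_3,Q_4$, or (ii) $(Q_3,Q_4,P^T)\in\mathcal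 R_{X_3^T,X_4^T}$ and $(Q^T,P_1,P_2)\in\mathcal L_{X_1^T,X_2^T}$ for some $P_1,P_2,Q_3,Q_4$. *)

From HB Require Import structures.
From mathcomp Require Import all_boot all_order all_algebra.
Set Implicit Arguments. Unset Strict Implicit. Unset Printing Implicit Defensive.
Import Order.TTheory GRing.Theory Num.Theory.
Local Open Scope ring_scope.

Section Defs.
Variable R : rcfType.

Definition is01 (a b : nat) (M : 'M[R]_(a, b)) : Prop :=
  forall i j, M i j = 0 \/ M i j = 1.

Definition Jmx (p q : nat) : 'M[R]_(p, q) := const_mx 1.

Definition gram_mates (a b : nat) (A B : 'M[R]_(a, b)) : Prop :=
  [/\ A <> B, A *m A^T = B *m B^T & A^T *m A = B^T *m B].

Definition mx_isomorphic (a b : nat) (A B : 'M[R]_(a, b)) : Prop :=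
  exists (P : 'M[R]_a) (Q : 'M[R]_b),
    [/\ is_perm_mx P, is_perm_mx Q & B = P *m A *m Q].

(* The singular values of A (the square roots of the eigenvalues of A A^T,
   counted with algebraic multiplicity) are pairwise distinct, i.e. every
   eigenvalue of A A^T has algebraic multiplicity at most one. Since A A^T is
   symmetric, its characteristic polynomial splits over the real closed R. *)
Definition distinct_singular_values (n : nat) (A : 'M[R]_n) : Prop :=
  forall x : R, (mup x (char_poly (A *m A^T)) <= 1)%N.

Definition inRset (a b : nat) (Z1 Z2 : 'M[R]_(a, b))
  (P1 P2 : 'M[R]_a) (Q : 'M[R]_b) : Prop :=
  [/\ is_perm_mx P1, is_perm_mx P2, is_perm_mx Q,
      Z2 = P1 *m Z1 *m Q & Z1 = P2 *m Z2 *m Q].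

Definition inLset (a b : nat) (Z1 Z2 : 'M[R]_(a, b))
  (P : 'M[R]_a) (Q1 Q2 : 'M[R]_b) : Prop :=
  [/\ is_perm_mx P, is_perm_mx Q1, is_perm_mx Q2,
      Z1 = P *m Z1 *m Q1 & Z2 = P *m Z2 *m Q2].

Definition fixable (k1 k2 m p : nat)
  (X1 X2 : 'M[R]_(k1, p)) (X3 X4 : 'M[R]_(m, k2)) (Y : 'M[R]_(m, p)) : Prop :=
  exists (P : 'M[R]_m) (Q : 'M[R]_p),
    [/\ is_perm_mx P, is_perm_mx Q, Y = P *m Y *m Q &
      ((exists P1 P2, inRset X1 X2 P1 P2 Q) /\
       (exists Q3 Q4, inLset X3 X4 P Q3 Q4))
      \/
      ((exists Q3 Q4, inRset X3^T X4^T Q3 Q4 P^T) /\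
       (exists P1 P2, inLset X1^T X2^T Q^T P1 P2))].

End Defs.

From HB Require Import structures.
From mathcomp Require Import all_boot all_order all_algebra fingroup perm ring.
Set Implicit Arguments. Unset Strict Implicit. Unset Printing Implicit Defensive.
Import Order.TTheory GRing.Theory Num.Theory.
Local Open Scope ring_scope.

(* Let u = (-1,...,-1, 1,...,1, 0,...,0) follow the row blocks of A and w the
   column blocks.  The row and column sum conditions give A w = -k2 u,
   A^T u = -k1 w and B w = k2 u, so u is an eigenvector of A A^T for k1 k2,
   a simple eigenvalue by the hypothesis on singular values.  If B = P A Q with
   permutation matrices, the Gram identities make P commute with A A^T and Q
   with A^T A; hence P u = eps u and Q w = delta w with eps delta = -1.  As P
   permutes the entries of u, eps = +-1.  For eps = -1, P swaps the first two
   row blocks and Q preserves the column blocks, and comparing the blocks of B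
   and P A Q is alternative (i) of fixability; for eps = 1 the same holds for
   the transposes, which is alternative (ii).  Conversely the permutations
   witnessing fixability assemble into block permutation matrices carrying A
   to B. *)

Section SimpleEigenvalue.
Variables (F : fieldType) (N : nat) (S : 'M[F]_N) (lam : F).

Lemma det_id_cols2_neq0 (V : 'M[F]_N) (i j : 'I_N) :
  i != j -> V i i = 1 -> V j i = 0 -> V i j = 0 -> V j j = 1 ->
  (forall a b, b != i -> b != j -> V a b = (a == b)%:R) -> \det V != 0.
Proof.
move=> nij Vii Vji Vij Vjj Vb; pose E := V - 1%:M.
have E0 a b : b != i -> b != j -> E a b = 0 by move=> bi bj; rewrite !mxE Vb ?subrr.
have Eij b : E i b = 0 /\ E j b = 0.
  rewrite !mxE; case: (eqVneq b i) => [->|bi].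
    by rewrite Vii Vji eq_sym (negbTE nij) !subrr.
  case: (eqVneq b j) => [->|bj]; first by rewrite Vij Vjj subr0 subrr.
  by rewrite !Vb // (eq_sym i) (eq_sym j) (negbTE bi) (negbTE bj) subrr.
have EE : E *m E = 0.
  apply/matrixP => a b; rewrite !mxE big1 // => c _.
  case: (eqVneq c i) => [->|ci]; first by rewrite (Eij b).1 mulr0.
  case: (eqVneq c j) => [->|cj]; first by rewrite (Eij b).2 mulr0.
  by rewrite E0 ?mul0r.
have : V *m (1%:M - E) = 1%:M.
  have -> : V = 1%:M + E by rewrite addrC subrK.
  by rewrite mulmxDl mul1mx mulmxBr mulmx1 EE subr0 subrK.
by case/mulmx1_unit; rewrite unitmxE unitfE.
Qed.

Lemma mup_char_poly_gt1 (y z : 'cV_N) (i j : 'I_N) :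
  i != j -> y i 0 = 1 -> y j 0 = 0 -> z i 0 = 0 -> z j 0 = 1 ->
  S *m y = lam *: y -> S *m z = lam *: z -> (1 < mup lam (char_poly S))%N.
Proof.
move=> nij yi yj zi zj Sy Sz; have nji : j != i by rewrite eq_sym.
pose V : 'M[F]_N := \matrix_(a, b)
  if b == i then y a 0 else if b == j then z a 0 else (a == b)%:R.
have V_unit : \det V != 0.
  apply: (det_id_cols2_neq0 nij); rewrite ?mxE ?eqxx ?(negbTE nji) //.
  by move=> a b /negbTE bi /negbTE bj; rewrite mxE bi bj.
pose M := char_poly_mx S.
have M_eig (x : 'cV_N) : S *m x = lam *: x ->
    M *m map_mx polyC x = ('X - lam%:P) *: map_mx polyC x.
  by move=> Sx; rewrite mulmxBl mul_scalar_mx -map_mxM Sx map_mxZ /= scalerBl.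
pose K : 'M[{poly F}]_N := \matrix_(a, b)
  if b == i then (y a 0)%:P else if b == j then (z a 0)%:P else M a b.
(* Columns [i] and [j] of [M *m V] are [('X - lam) y] and [('X - lam) z], so
   [('X - lam)^2] divides [\det (M *m V) = char_poly S * \det V]. *)
pose d : 'rV[{poly F}]_N := \row_b if (b == i) || (b == j) then 'X - lam%:P else 1.
have MV : M *m map_mx polyC V = K *m diag_mx d.
  apply/matrixP => a b; rewrite mul_mx_diag !mxE.
  have col_eig (v : 'cV_N) : S *m v = lam *: v ->
      (M *m map_mx polyC v) a 0 = ('X - lam%:P) * (v a 0)%:P.
    by move=> Sv; rewrite M_eig // !mxE.
  case: (eqVneq b i) => [->|bi].
    by rewrite mulrC -col_eig // !mxE; apply: eq_bigr => c _; rewrite !mxE eqxx.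
  case: (eqVneq b j) => [->|bj].
    by rewrite mulrC -col_eig // !mxE; apply: eq_bigr => c _; rewrite !mxE eqxx (negbTE nji).
  rewrite mulr1 (bigD1 b) //= big1 => [|c cb]; rewrite !mxE (negbTE bi) (negbTE bj).
    by rewrite eqxx mulr1 addr0.
  by rewrite eq_sym (negbTE cb) mulr0.
have := congr1 determinant MV.
rewrite !det_mulmx det_map_mx det_diag (bigD1 i) // (bigD1 j) //= big1; last first.
  by move=> b /andP[bi bj]; rewrite mxE (negbTE bi) (negbTE bj).
rewrite !mxE eqxx (negbTE nji) eqxx orbT /= mulr1 => detMV.
have : ('X - lam%:P) ^+ 2 %| char_poly S.
  rewrite -(dvdpZr _ _ V_unit) -mul_polyC mulrC /char_poly -/M detMV.
  by rewrite dvdp_mull // expr2.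
by rewrite -mup_geq // monic_neq0 // char_poly_monic.
Qed.

Lemma simple_eigenvalue_colinear (u x : 'cV_N) :
  (mup lam (char_poly S) <= 1)%N -> u != 0 ->
  S *m u = lam *: u -> S *m x = lam *: x -> exists c, x = c *: u.
Proof.
move=> simple /cV0Pn[i ui] Su Sx.
have eig_comb (v v' : 'cV_N) (a b : F) : S *m v = lam *: v -> S *m v' = lam *: v' ->
    S *m (a *: v + b *: v') = lam *: (a *: v + b *: v').
  by move=> Sv Sv'; rewrite mulmxDr -!scalemxAr Sv Sv' !scalerA scalerDr !scalerA !(mulrC lam).
exists (x i 0 / u i 0); apply/eqP; rewrite -subr_eq0; set x' := x - _.
have Sx' : S *m x' = lam *: x' by rewrite /x' -[x in x - _]scale1r -scaleNr eig_comb.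
have x'i : x' i 0 = 0 by rewrite !mxE divfK // subrr.
clearbody x'.
apply/negPn/negP => /cV0Pn[j x'j].
have nij : i != j by apply: contraNneq x'j => <-; rewrite x'i.
have [z [Sz zi zj]] : exists z : 'cV_N, [/\ S *m z = lam *: z, z i 0 = 0 & z j 0 = 1].
  exists ((x' j 0)^-1 *: x'); rewrite !mxE x'i mulr0 mulVf //.
  by split => //; rewrite -scalemxAr Sx' !scalerA mulrC.
have [y [Sy yi yj]] : exists y : 'cV_N, [/\ S *m y = lam *: y, y i 0 = 1 & y j 0 = 0].
  exists ((u i 0)^-1 *: u + (- (u i 0)^-1 * u j 0) *: z).
  by rewrite eig_comb // !mxE zi zj mulr0 addr0 mulVf // mulr1 mulNr mulrC addrN.
by have := mup_char_poly_gt1 nij yi yj zi zj Sy Sz; rewrite ltnNge simple.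
Qed.

End SimpleEigenvalue.

Section GramEquivalence.
Variables (F : fieldType) (r c : nat) (A B : 'M[F]_(r, c)) (P : 'M[F]_r) (Q : 'M[F]_c).
Hypotheses (PTP : P^T *m P = 1%:M) (QQT : Q *m Q^T = 1%:M) (eB : B = P *m A *m Q).
Hypotheses (gram_rows : A *m A^T = B *m B^T) (gram_cols : A^T *m A = B^T *m B).

Lemma gram_rows_comm : A *m A^T *m P = P *m (A *m A^T).
Proof.
rewrite [in LHS]gram_rows eB !trmx_mul !mulmxA -[_ *m Q *m Q^T]mulmxA QQT mulmx1.
by rewrite -mulmxA PTP mulmx1.
Qed.

Lemma gram_cols_comm : A^T *m A *m Q = Q *m (A^T *m A).
Proof.
rewrite [in RHS]gram_cols eB !trmx_mul !mulmxA -[_ *m P^T *m P]mulmxA PTP mulmx1.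
by rewrite QQT mul1mx.
Qed.

Lemma gram_equiv_rescales (u : 'cV_r) (w : 'cV_c) (a b : F) :
  a != 0 -> b != 0 -> u != 0 -> (mup (a * b) (char_poly (A *m A^T)) <= 1)%N ->
  A *m w = - a *: u -> A^T *m u = - b *: w -> B *m w = a *: u ->
  exists eps delta, [/\ P *m u = eps *: u, Q *m w = delta *: w & eps * delta = -1].
Proof.
move=> a0 b0 u0 simple Aw ATu Bw.
have Su : A *m A^T *m u = (a * b) *: u.
  by rewrite -mulmxA ATu -scalemxAr Aw scalerA mulrNN mulrC.
have Tw : A^T *m A *m w = (a * b) *: w.
  by rewrite -mulmxA Aw -scalemxAr ATu scalerA mulrNN.
have [eps Pu] : exists eps, P *m u = eps *: u.
  apply: (simple_eigenvalue_colinear simple u0 Su).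
  by rewrite mulmxA gram_rows_comm -mulmxA Su scalemxAr.
have [x AQw] : exists x, A *m (Q *m w) = x *: u.
  apply: (simple_eigenvalue_colinear simple u0 Su).
  by rewrite -mulmxA (mulmxA A^T) (mulmxA _ Q) gram_cols_comm -mulmxA Tw !scalemxAr.
have Qw : Q *m w = (- x / a) *: w.
  apply: (scalerI (mulf_neq0 a0 b0)).
  rewrite scalemxAr -Tw mulmxA -gram_cols_comm -!mulmxA AQw -scalemxAr ATu !scalerA.
  by congr (_ *: w); field.
exists eps, (- x / a); split => //.
have : a *: u = (x * eps) *: u by rewrite -Bw eB -!mulmxA AQw -scalemxAr Pu scalerA.
move/eqP; rewrite -subr_eq0 -scalerBl scalemx_eq0 (negbTE u0) orbF subr_eq0 => /eqP ea.
by rewrite ea; field; move: a0; rewrite ea mulf_eq0 negb_or andbC.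
Qed.

End GramEquivalence.

Lemma perm_restrict (T D : finType) (s : {perm T}) (e1 e2 : D -> T) :
  injective e1 -> (forall a, exists b, s (e1 a) = e2 b) ->
  exists s' : {perm D}, forall a, s (e1 a) = e2 (s' a).
Proof.
move=> e1_inj e1s; pose f a := odflt a [pick b | s (e1 a) == e2 b].
have fE a : s (e1 a) = e2 (f a).
  by rewrite /f; case: pickP => [b /eqP //|no_b]; have [b /eqP] := e1s a; rewrite no_b.
have f_inj : injective f.
  by move=> a a' faa'; apply/e1_inj/(@perm_inj _ s); rewrite !fE faa'.
by exists (perm f_inj) => a; rewrite permE.
Qed.

Section PermMatrices.
Variable R : pzSemiRingType.

Lemma mulmx_perm_mxE m n (s : 'S_m) (t : 'S_n) (M : 'M[R]_(m, n)) i j :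
  (perm_mx s *m M *m perm_mx t) i j = M (s i) (t^-1 j)%g.
Proof. by rewrite -[t]invgK -col_permE -row_permE !mxE invgK. Qed.

Lemma tr_perm_mxK n (s : 'S_n) : (perm_mx s)^T *m perm_mx s = 1%:M :> 'M[R]_n.
Proof. by rewrite tr_perm_mx -perm_mxM mulVg perm_mx1. Qed.

Lemma perm_mxKtr n (s : 'S_n) : perm_mx s *m (perm_mx s)^T = 1%:M :> 'M[R]_n.
Proof. by rewrite tr_perm_mx -perm_mxM mulgV perm_mx1. Qed.

Lemma mul_perm_const_mx m n (P : 'M[R]_m) (a : R) :
  is_perm_mx P -> P *m (const_mx a : 'M_(m, n)) = const_mx a.
Proof. by case/is_perm_mxP => s ->; rewrite -row_permE row_perm_const. Qed.

Lemma mul_const_perm_mx m n (Q : 'M[R]_n) (a : R) :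
  is_perm_mx Q -> (const_mx a : 'M_(m, n)) *m Q = const_mx a.
Proof. by case/is_perm_mxP => s ->; rewrite -[s]invgK -col_permE col_perm_const. Qed.

Lemma is_perm_mx_sum a b (M : 'M[R]_(a + b)) (g : 'I_a + 'I_b -> 'I_a + 'I_b) :
  injective g -> (forall x y, M (unsplit x) (unsplit y) = (g x == y)%:R) ->
  is_perm_mx M.
Proof.
move=> g_inj Mg; pose f i := unsplit (g (split i)).
have f_inj : injective f by move=> i j /(can_inj unsplitK)/g_inj/(can_inj splitK).
apply/is_perm_mxP; exists (perm f_inj); apply/matrixP => i j.
by rewrite -[i]splitK -[j]splitK Mg !mxE permE /f !unsplitK (inj_eq (can_inj unsplitK)).
Qed.

Lemma is_perm_mx_diag a b (A : 'M[R]_a) (D : 'M[R]_b) :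
  is_perm_mx A -> is_perm_mx D -> is_perm_mx (block_mx A 0 0 D).
Proof.
case/is_perm_mxP => s ->; case/is_perm_mxP => t ->.
apply: (@is_perm_mx_sum _ _ _ (fun x => match x with inl x => inl (s x) | inr y => inr (t y) end)).
  by case=> x [] y //= [] /perm_inj ->.
by case=> x [] y; rewrite /= ?(block_mxEul, block_mxEur, block_mxEdl, block_mxEdr) !mxE.
Qed.

Lemma is_perm_mx_antidiag k (A D : 'M[R]_k) :
  is_perm_mx A -> is_perm_mx D -> is_perm_mx (block_mx 0 A D 0).
Proof.
case/is_perm_mxP => s ->; case/is_perm_mxP => t ->.
apply: (@is_perm_mx_sum _ _ _ (fun x => match x with inl x => inr (s x) | inr y => inl (t y) end)).
  by case=> x [] y //= [] /perm_inj ->.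
by case=> x [] y; rewrite /= ?(block_mxEul, block_mxEur, block_mxEdl, block_mxEdr) !mxE.
Qed.

Lemma mul_const_mx m n p (a b : R) :
  (const_mx a : 'M_(m, n)) *m (const_mx b : 'M_(n, p)) = const_mx (a * b *+ n).
Proof.
apply/matrixP => i j; rewrite !mxE (eq_bigr (fun=> a * b)) => [|l _]; last by rewrite !mxE.
by rewrite sumr_const card_ord.
Qed.

End PermMatrices.

Definition idx1 {k m : nat} (a : 'I_k) : 'I_(k + k + m) := lshift m (lshift k a).
Definition idx2 {k m : nat} (a : 'I_k) : 'I_(k + k + m) := lshift m (rshift k a).
Definition idx3 {k m : nat} (c : 'I_m) : 'I_(k + k + m) := rshift (k + k) c.

Lemma idx1_inj {k m : nat} : injective (@idx1 k m).
Proof. by move=> a b /lshift_inj/lshift_inj. Qed.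
Lemma idx2_inj {k m : nat} : injective (@idx2 k m).
Proof. by move=> a b /lshift_inj/rshift_inj. Qed.
Lemma idx3_inj {k m : nat} : injective (@idx3 k m).
Proof. exact: rshift_inj. Qed.

Section SignVector.
Variables (R : numDomainType) (k m : nat).

Definition sgn_vec : 'cV[R]_(k + k + m) := col_mx (col_mx (- const_mx 1) (const_mx 1)) 0.

Lemma sgn_vec1 a : sgn_vec (idx1 a) 0 = -1.
Proof. by rewrite /sgn_vec /idx1 !col_mxEu !mxE. Qed.
Lemma sgn_vec2 a : sgn_vec (idx2 a) 0 = 1.
Proof. by rewrite /sgn_vec /idx2 col_mxEu col_mxEd mxE. Qed.
Lemma sgn_vec3 c : sgn_vec (idx3 c) 0 = 0.
Proof. by rewrite /sgn_vec /idx3 col_mxEd mxE. Qed.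

Variant sgn_vec_spec : 'I_(k + k + m) -> R -> Type :=
  | SgnVec1 a : sgn_vec_spec (idx1 a) (-1)
  | SgnVec2 a : sgn_vec_spec (idx2 a) 1
  | SgnVec3 c : sgn_vec_spec (idx3 c) 0.

Lemma sgn_vecP i : sgn_vec_spec i (sgn_vec i 0).
Proof.
rewrite -[i]splitK; case: (split i) => [j|c]; last by rewrite -/(idx3 c) sgn_vec3; constructor.
rewrite -[j]splitK; case: (split j) => a /=.
  by rewrite -/(idx1 a) sgn_vec1; constructor.
by rewrite -/(idx2 a) sgn_vec2; constructor.
Qed.

Fact oppr1_neq1 : (-1 : R) != 1. Proof. by rewrite eqNr oner_eq0. Qed.

Lemma sgn_vec_idx1 i : sgn_vec i 0 = -1 -> exists a, i = idx1 a.
Proof.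
case: sgn_vecP => [a|a|c] /eqP; first by exists a.
  by rewrite eq_sym (negbTE oppr1_neq1).
by rewrite eq_sym oppr_eq0 oner_eq0.
Qed.

Lemma sgn_vec_idx2 i : sgn_vec i 0 = 1 -> exists a, i = idx2 a.
Proof.
case: sgn_vecP => [a|a|c] /eqP; [by rewrite (negbTE oppr1_neq1) | by exists a |].
by rewrite eq_sym oner_eq0.
Qed.

Lemma sgn_vec_idx3 i : sgn_vec i 0 = 0 -> exists c, i = idx3 c.
Proof.
case: sgn_vecP => [a|a|c] /eqP; last by exists c.
  by rewrite oppr_eq0 oner_eq0.
by rewrite oner_eq0.
Qed.

Lemma sgn_vec_neq0 : (0 < k)%N -> sgn_vec != 0.
Proof.
move=> k_gt0; apply/cV0Pn; exists (idx1 (Ordinal k_gt0)).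
by rewrite sgn_vec1 oppr_eq0 oner_eq0.
Qed.

Lemma sgn_vec_perm_scale (s : 'S_(k + k + m)) eps :
  (0 < k)%N -> eps != 0 -> (forall i, sgn_vec (s i) 0 = eps * sgn_vec i 0) ->
  eps = 1 \/ eps = -1.
Proof.
move=> k_gt0 eps0 /(_ (idx1 (Ordinal k_gt0))); rewrite sgn_vec1 mulrN1.
case: sgn_vecP => _ e; first by left; apply/oppr_inj.
  by right; rewrite -[eps]opprK -e.
by move: eps0; rewrite -oppr_eq0 -e eqxx.
Qed.

Lemma sgn_vec_swap (s : 'S_(k + k + m)) :
  (forall i, sgn_vec (s i) 0 = - sgn_vec i 0) ->
  exists (s12 s21 : 'S_k) (pi : 'S_m), [/\ forall a, s (idx1 a) = idx2 (s12 a),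
    forall a, s (idx2 a) = idx1 (s21 a) & forall c, s (idx3 c) = idx3 (pi c)].
Proof.
move=> hs.
have [s12 ?] : exists s12 : 'S_k, forall a, s (idx1 a) = idx2 (s12 a).
  by apply: perm_restrict idx1_inj _ => a; apply: sgn_vec_idx2; rewrite hs sgn_vec1 opprK.
have [s21 ?] : exists s21 : 'S_k, forall a, s (idx2 a) = idx1 (s21 a).
  by apply: perm_restrict idx2_inj _ => a; apply: sgn_vec_idx1; rewrite hs sgn_vec2.
have [pi ?] : exists pi : 'S_m, forall c, s (idx3 c) = idx3 (pi c).
  by apply: perm_restrict idx3_inj _ => c; apply: sgn_vec_idx3; rewrite hs sgn_vec3 oppr0.
by exists s12, s21, pi.
Qed.

Lemma sgn_vec_fix (s : 'S_(k + k + m)) :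
  (forall i, sgn_vec (s i) 0 = sgn_vec i 0) ->
  exists (s1 s2 : 'S_k) (pi : 'S_m), [/\ forall a, s (idx1 a) = idx1 (s1 a),
    forall a, s (idx2 a) = idx2 (s2 a) & forall c, s (idx3 c) = idx3 (pi c)].
Proof.
move=> hs.
have [s1 ?] : exists s1 : 'S_k, forall a, s (idx1 a) = idx1 (s1 a).
  by apply: perm_restrict idx1_inj _ => a; apply: sgn_vec_idx1; rewrite hs sgn_vec1.
have [s2 ?] : exists s2 : 'S_k, forall a, s (idx2 a) = idx2 (s2 a).
  by apply: perm_restrict idx2_inj _ => a; apply: sgn_vec_idx2; rewrite hs sgn_vec2.
have [pi ?] : exists pi : 'S_m, forall c, s (idx3 c) = idx3 (pi c).
  by apply: perm_restrict idx3_inj _ => c; apply: sgn_vec_idx3; rewrite hs sgn_vec3.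
by exists s1, s2, pi.
Qed.

End SignVector.

Definition bordered_mx (R : Type) k1 k2 m p (Z : 'M[R]_(k1 + k1, k2 + k2))
    (X1 X2 : 'M[R]_(k1, p)) (X3 X4 : 'M[R]_(m, k2)) (Y : 'M[R]_(m, p)) :
    'M[R]_(k1 + k1 + m, k2 + k2 + p) :=
  block_mx Z (col_mx X1 X2) (row_mx X3 X4) Y.

Section BorderedMatrix.
Variables (R : Type) (k1 k2 m p : nat) (Z : 'M[R]_(k1 + k1, k2 + k2)).
Variables (X1 X2 : 'M[R]_(k1, p)) (X3 X4 : 'M[R]_(m, k2)) (Y : 'M[R]_(m, p)).
Local Notation M := (bordered_mx Z X1 X2 X3 X4 Y).

Lemma bordered_mxE1 a c : M (idx1 a) (idx3 c) = X1 a c.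
Proof. by rewrite block_mxEur col_mxEu. Qed.
Lemma bordered_mxE2 a c : M (idx2 a) (idx3 c) = X2 a c.
Proof. by rewrite block_mxEur col_mxEd. Qed.
Lemma bordered_mxE3 a c : M (idx3 a) (idx1 c) = X3 a c.
Proof. by rewrite block_mxEdl row_mxEl. Qed.
Lemma bordered_mxE4 a c : M (idx3 a) (idx2 c) = X4 a c.
Proof. by rewrite block_mxEdl row_mxEr. Qed.
Lemma bordered_mxEY a c : M (idx3 a) (idx3 c) = Y a c.
Proof. by rewrite block_mxEdr. Qed.

Lemma tr_bordered_mx : M^T = bordered_mx Z^T X3^T X4^T X1^T X2^T Y^T.
Proof. by rewrite /bordered_mx tr_block_mx tr_col_mx tr_row_mx. Qed.

End BorderedMatrix.

Section JBorderedMatrices.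
Variable R : rcfType.

Definition antidiagJ k1 k2 : 'M[R]_(k1 + k1, k2 + k2) := block_mx 0 (Jmx R k1 k2) (Jmx R k1 k2) 0.
Definition diagJ k1 k2 : 'M[R]_(k1 + k1, k2 + k2) := block_mx (Jmx R k1 k2) 0 0 (Jmx R k1 k2).

Section Blocks.
Variables (k1 k2 m p : nat) (X1 X2 : 'M[R]_(k1, p)) (X3 X4 : 'M[R]_(m, k2)) (Y : 'M[R]_(m, p)).

Lemma tr_bordered_antidiagJ : (bordered_mx (antidiagJ k1 k2) X1 X2 X3 X4 Y)^T =
  bordered_mx (antidiagJ k2 k1) X3^T X4^T X1^T X2^T Y^T.
Proof. by rewrite tr_bordered_mx tr_block_mx !trmx0 trmx_const. Qed.

Lemma tr_bordered_diagJ : (bordered_mx (diagJ k1 k2) X1 X2 X3 X4 Y)^T =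
  bordered_mx (diagJ k2 k1) X3^T X4^T X1^T X2^T Y^T.
Proof. by rewrite tr_bordered_mx tr_block_mx !trmx0 trmx_const. Qed.

Hypothesis h34 : X3 *m (const_mx 1 : 'cV_k2) = X4 *m (const_mx 1 : 'cV_k2).

Lemma antidiagJ_sgn_vec :
  bordered_mx (antidiagJ k1 k2) X1 X2 X3 X4 Y *m sgn_vec R k2 p = - k2%:R *: sgn_vec R k1 m.
Proof.
rewrite /bordered_mx /sgn_vec !mul_block_col !mul_row_col !(mul0mx, mulmx0, add0r, addr0).
rewrite !mulmxN h34 addNr !scale_col_mx scaler0 !mul_const_mx.
by congr (col_mx (col_mx _ _) _); apply/matrixP => i j; rewrite !mxE; ring.
Qed.

Lemma diagJ_sgn_vec :
  bordered_mx (diagJ k1 k2) X1 X2 X3 X4 Y *m sgn_vec R k2 p = k2%:R *: sgn_vec R k1 m.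
Proof.
rewrite /bordered_mx /sgn_vec !mul_block_col !mul_row_col !(mul0mx, mulmx0, add0r, addr0).
rewrite !mulmxN h34 addNr !scale_col_mx scaler0 !mul_const_mx.
by congr (col_mx (col_mx _ _) _); apply/matrixP => i j; rewrite !mxE; ring.
Qed.

End Blocks.

End JBorderedMatrices.

Section Fixability.
Variable R : rcfType.

Definition fixable_by k1 k2 m p (X1 X2 : 'M[R]_(k1, p)) (X3 X4 : 'M[R]_(m, k2))
    (Y : 'M[R]_(m, p)) (P : 'M[R]_m) (Q : 'M[R]_p) : Prop :=
  [/\ is_perm_mx P, is_perm_mx Q, Y = P *m Y *m Q,
    exists P1 P2, inRset X1 X2 P1 P2 Q & exists Q3 Q4, inLset X3 X4 P Q3 Q4].

Lemma fixableE k1 k2 m p (X1 X2 : 'M[R]_(k1, p)) (X3 X4 : 'M[R]_(m, k2)) (Y : 'M[R]_(m, p)) :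
  fixable X1 X2 X3 X4 Y <->
  (exists P Q, fixable_by X1 X2 X3 X4 Y P Q) \/
  (exists P Q, fixable_by X3^T X4^T X1^T X2^T Y^T P Q).
Proof.
have trY (P : 'M[R]_m) (Q : 'M[R]_p) : (Y = P *m Y *m Q) <-> (Y^T = Q^T *m Y^T *m P^T).
  apply: conj => [eY|eYT]; first by rewrite {1}eY !trmx_mul mulmxA.
  by rewrite -[Y]trmxK {1}eYT !trmx_mul !trmxK mulmxA.
split => [[P [Q [hP hQ /trY eY [[hR hL]|[hR hL]]]]]|].
- by left; exists P, Q; split => //; apply/trY.
- by right; exists Q^T, P^T; split; rewrite ?is_perm_mx_tr.
case=> [[P [Q [hP hQ eY hR hL]]]|[P [Q [hP hQ eYT hR hL]]]].
  by exists P, Q; split => //; left.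
exists Q^T, P^T; split; rewrite ?is_perm_mx_tr //; last by right; rewrite !trmxK.
by apply/trY; rewrite !trmxK.
Qed.

Lemma mx_isomorphic_tr r c (A B : 'M[R]_(r, c)) : mx_isomorphic A^T B^T -> mx_isomorphic A B.
Proof.
case=> P [Q [hP hQ eB]]; exists Q^T, P^T; split; rewrite ?is_perm_mx_tr //.
by rewrite -[B]trmxK eB !trmx_mul trmxK mulmxA.
Qed.

Lemma iso_of_fixable_by k1 k2 m p (X1 X2 : 'M[R]_(k1, p)) (X3 X4 : 'M[R]_(m, k2))
    (Y : 'M[R]_(m, p)) P Q :
  fixable_by X1 X2 X3 X4 Y P Q ->
  mx_isomorphic (bordered_mx (antidiagJ R k1 k2) X1 X2 X3 X4 Y)
                (bordered_mx (diagJ R k1 k2) X1 X2 X3 X4 Y).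
Proof.
case=> hP hQ eY [P1 [P2 [hP1 hP2 _ e2 e1]]] [Q3 [Q4 [_ hQ3 hQ4 e3 e4]]].
exists (block_mx (block_mx 0 P2 P1 0) 0 0 P), (block_mx (block_mx Q3 0 0 Q4) 0 0 Q).
split; [by rewrite !is_perm_mx_diag ?is_perm_mx_antidiag | by rewrite !is_perm_mx_diag |].
rewrite /bordered_mx /antidiagJ /diagJ !(mulmx_block, mul_block_col, mul_row_block,
  mul_col_mx, mul_mx_row, mul_row_col, mul0mx, mulmx0, row_mx0, col_mx0, add0r, addr0).
by rewrite !(mul_perm_const_mx, mul_const_perm_mx) // -e1 -e2 -e3 -e4 -eY.
Qed.

Lemma fixable_by_of_perm k1 k2 m p (Z Z' : 'M[R]_(k1 + k1, k2 + k2))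
    (X1 X2 : 'M[R]_(k1, p)) (X3 X4 : 'M[R]_(m, k2)) (Y : 'M[R]_(m, p))
    (s : 'S_(k1 + k1 + m)) (t : 'S_(k2 + k2 + p)) :
  (forall i j, bordered_mx Z' X1 X2 X3 X4 Y i j = bordered_mx Z X1 X2 X3 X4 Y (s i) (t j)) ->
  (forall i, sgn_vec R k1 m (s i) 0 = - sgn_vec R k1 m i 0) ->
  (forall j, sgn_vec R k2 p (t j) 0 = sgn_vec R k2 p j 0) ->
  exists P Q, fixable_by X1 X2 X3 X4 Y P Q.
Proof.
move=> BA /sgn_vec_swap[s12 [s21 [pi [S1 S2 S3]]]] /sgn_vec_fix[t1 [t2 [rho [T1 T2 T3]]]].
exists (perm_mx pi), (perm_mx rho^-1); split; rewrite ?perm_mx_is_perm //.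
- apply/matrixP => a c; rewrite mulmx_perm_mxE invgK.
  by have := BA (idx3 a) (idx3 c); rewrite S3 T3 !bordered_mxEY.
- exists (perm_mx s21), (perm_mx s12); split; rewrite ?perm_mx_is_perm //;
    apply/matrixP => a c; rewrite mulmx_perm_mxE invgK.
    by have := BA (idx2 a) (idx3 c); rewrite S2 T3 bordered_mxE2 bordered_mxE1.
  by have := BA (idx1 a) (idx3 c); rewrite S1 T3 bordered_mxE1 bordered_mxE2.
- exists (perm_mx t1^-1), (perm_mx t2^-1); split; rewrite ?perm_mx_is_perm //;
    apply/matrixP => a c; rewrite mulmx_perm_mxE invgK.
    by have := BA (idx3 a) (idx1 c); rewrite S3 T1 !bordered_mxE3.
  by have := BA (idx3 a) (idx2 c); rewrite S3 T2 !bordered_mxE4.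
Qed.

Lemma iso_of_fixable k1 k2 m p (X1 X2 : 'M[R]_(k1, p)) (X3 X4 : 'M[R]_(m, k2))
    (Y : 'M[R]_(m, p)) :
  fixable X1 X2 X3 X4 Y ->
  mx_isomorphic (bordered_mx (antidiagJ R k1 k2) X1 X2 X3 X4 Y)
                (bordered_mx (diagJ R k1 k2) X1 X2 X3 X4 Y).
Proof.
case/fixableE => -[P [Q hPQ]]; first exact: iso_of_fixable_by hPQ.
apply: mx_isomorphic_tr; rewrite tr_bordered_antidiagJ tr_bordered_diagJ.
exact: iso_of_fixable_by hPQ.
Qed.

End Fixability.

Lemma mulmx_castmx (R : pzSemiRingType) m m' n n' q q'
    (e1 : m = m') (e2 : n = n') (e3 : q = q') (M : 'M[R]_(m, n)) (N : 'M[R]_(n, q)) :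
  castmx (e1, e2) M *m castmx (e2, e3) N = castmx (e1, e3) (M *m N).
Proof. by case: m' / e1; case: n' / e2; case: q' / e3; rewrite !castmx_id. Qed.

Lemma char_poly_castmx (R : comNzRingType) n n' (e : n = n') (A : 'M[R]_n) :
  char_poly (castmx (e, e) A) = char_poly A.
Proof. by case: n' / e; rewrite castmx_id. Qed.

Lemma mx_isomorphic_castmx (R : rcfType) r c r' c' (e : (r = r') * (c = c'))
    (A B : 'M[R]_(r, c)) :
  mx_isomorphic (castmx e A) (castmx e B) <-> mx_isomorphic A B.
Proof. by case: e => e1 e2; case: r' / e1; case: c' / e2; rewrite !castmx_id. Qed.

Section BorderedGramMates.
Variables (R : rcfType) (k1 k2 m p : nat).
Variables (X1 X2 : 'M[R]_(k1, p)) (X3 X4 : 'M[R]_(m, k2)) (Y : 'M[R]_(m, p)).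
Hypotheses (k1_gt0 : (0 < k1)%N) (k2_gt0 : (0 < k2)%N).
Hypothesis h12 : (const_mx 1 : 'rV_k1) *m X1 = const_mx 1 *m X2.
Hypothesis h34 : X3 *m (const_mx 1 : 'cV_k2) = X4 *m const_mx 1.
Local Notation A := (bordered_mx (antidiagJ R k1 k2) X1 X2 X3 X4 Y).
Local Notation B := (bordered_mx (diagJ R k1 k2) X1 X2 X3 X4 Y).
Local Notation u := (sgn_vec R k1 m).
Local Notation w := (sgn_vec R k2 p).
Hypotheses (gram_rows : A *m A^T = B *m B^T) (gram_cols : A^T *m A = B^T *m B).
Hypothesis simple_sv : forall x, (mup x (char_poly (A *m A^T)) <= 1)%N.

Lemma fixable_of_iso : mx_isomorphic A B -> fixable X1 X2 X3 X4 Y.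
Proof.
case=> _ [_ [/is_perm_mxP[s ->] /is_perm_mxP[t ->] eB]].
have h12T : X1^T *m (const_mx 1 : 'cV_k1) = X2^T *m const_mx 1.
  by rewrite -[const_mx 1](trmx_const 1) -!trmx_mul h12.
have ATu : A^T *m u = - k1%:R *: w.
  by rewrite tr_bordered_antidiagJ (antidiagJ_sgn_vec _ _ _ h12T).
have k1_neq0 : k1%:R != 0 :> R by rewrite pnatr_eq0 -lt0n.
have k2_neq0 : k2%:R != 0 :> R by rewrite pnatr_eq0 -lt0n.
have [eps [delta [Pu Qw ed]]] := gram_equiv_rescales (tr_perm_mxK _ s) (perm_mxKtr _ t) eB
  gram_rows gram_cols k2_neq0 k1_neq0 (sgn_vec_neq0 R m k1_gt0) (simple_sv _)
  (antidiagJ_sgn_vec _ _ _ h34) ATu (diagJ_sgn_vec _ _ _ h34).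
have hs i : u (s i) 0 = eps * u i 0.
  by move/matrixP/(_ i 0): Pu; rewrite -row_permE !mxE.
have ht j : w (t^-1 j)%g 0 = - eps * w j 0.
  move/matrixP/(_ (t^-1 j)%g 0): Qw; rewrite -row_permE !mxE permKV => ->.
  by rewrite mulrA mulNr ed opprK mul1r.
have BA i j : B i j = A (s i) (t^-1 j)%g by rewrite eB mulmx_perm_mxE.
have eps0 : eps != 0.
  by apply/eqP => e0; move/eqP: ed; rewrite e0 mul0r eq_sym oppr_eq0 oner_eq0.
apply/fixableE; case: (sgn_vec_perm_scale k1_gt0 eps0 hs) => eps1; rewrite eps1 in hs ht.
- right; apply: (fixable_by_of_perm (Z := antidiagJ R k2 k1) (Z' := diagJ R k2 k1)
    (s := (t^-1)%g) (t := s)) => [j i|j|i].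
  + by rewrite -tr_bordered_antidiagJ -tr_bordered_diagJ [LHS]mxE [RHS]mxE.
  + by rewrite ht mulN1r.
  + by rewrite hs mul1r.
- left; apply: (fixable_by_of_perm (s := s) (t := (t^-1)%g)) => [i j|i|j].
  + exact: BA.
  + by rewrite hs mulN1r.
  + by rewrite ht opprK mul1r.
Qed.

End BorderedGramMates.

Theorem theorem6p10 (R : rcfType) (n k1 k2 m p : nat)
  (eqr : ((k1 + k1) + m)%N = n) (eqc : ((k2 + k2) + p)%N = n)
  (X1 X2 : 'M[R]_(k1, p)) (X3 X4 : 'M[R]_(m, k2)) (Y : 'M[R]_(m, p))
  (A B : 'M[R]_n) :
  (0 < k1)%N -> (0 < k2)%N ->
  A = castmx (eqr, eqc)
        (block_mx (block_mx 0 (Jmx R k1 k2) (Jmx R k1 k2) 0)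
                  (col_mx X1 X2) (row_mx X3 X4) Y) ->
  B = castmx (eqr, eqc)
        (block_mx (block_mx (Jmx R k1 k2) 0 0 (Jmx R k1 k2))
                  (col_mx X1 X2) (row_mx X3 X4) Y) ->
  is01 A -> is01 B ->
  (const_mx 1 : 'M[R]_(1, k1)) *m X1 = (const_mx 1 : 'M[R]_(1, k1)) *m X2 ->
  X3 *m (const_mx 1 : 'M[R]_(k2, 1)) = X4 *m (const_mx 1 : 'M[R]_(k2, 1)) ->
  gram_mates A B ->
  distinct_singular_values A ->
  \rank (A - B) = 1%N ->
  (mx_isomorphic A B <-> fixable X1 X2 X3 X4 Y).
Proof.
move=> k1_gt0 k2_gt0 -> -> _ _ h12 h34 [_ gram_rows gram_cols] simple _.
rewrite mx_isomorphic_castmx; split; last exact: iso_of_fixable.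
move: gram_rows gram_cols simple; rewrite /distinct_singular_values !trmx_cast !mulmx_castmx.
move=> /(can_inj (castmxK _ _)) gram_rows /(can_inj (castmxK _ _)) gram_cols simple.
by apply: fixable_of_iso => // x; rewrite -(char_poly_castmx eqr).
Qed.
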